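(* Fix $\theta\in[0,1]$, $u\in[0,1)$, $m\in\mathbb N$ ($m\ge2$ if $u>0$) and $h=\tau/(m-u)$. If there exists $p\in\mathbb R$ such that $$F\big(A^{\frac p2-1}BA^{-\frac p2}\big)\subseteq\bigcap_{y\in -hF(A)}D_y,$$ then the $\theta$-method is stable. (Here $-hF(A)=\{-hz: z\in F(A)\}=[-h\lambda_{\max}(A),-h\lambda_{\min}(A)]\subset(-\infty,0)$.)
   Context: Let $N\in\mathbb N$, $\tau>0$, let $A\in M_N(\mathbb C)$ be Hermitian positive definite and $B\in M_N(\mathbb C)$ arbitrary, and consider the delay differential equation $y'(t)=-Ay(t)+By(t-\tau)$. Fix $\theta\in[0,1]$, $u\in[0,1)$ and $m\in\mathbb N$ (with $m\ge2$ if $u>0$), and set the step size $h=\tau/(m-u)$. The $\theta$-method (with linear interpolation of the delayed term) is the recursion, for $n\ge0$ and arbitrary starting values $y_{-m},\dots,y_0\in\mathbb C^N$, $$y_{n+1}=y_n+h(1-\theta)\big[-Ay_n+B((1-u)y_{n-m}+u\,y_{n-m+1})\big]+h\theta\big[-Ay_{n+1}+B((1-u)y_{n-m+1}+u\,y_{n-m+2})\big].$$ The method is called stable (for these $\theta,u,m,h$) if for every choice of starting values $y_n\to0$ as $n\to\infty$. Define $a(z)=z^{m+1}-z^m$, $b(z)=\theta(uz^2+(1-u)z)+(1-\theta)(uz+(1-u))$, $c(z)=\theta z^{m+1}+(1-\theta)z^m$. For $y<0$, $D_y$ is the set of $\mu\in\mathbb C$ such that all roots $\xi$ of $a(\xi)=y\,c(\xi)-y\mu\,b(\xi)$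 satisfy $|\xi|<1$. For $s\in\mathbb R$, $A^s$ is defined via the spectral decomposition of $A$; $F(M)=\{x^*Mx:x\in\mathbb C^N,\ x^*x=1\}$ is the field of values. *)

From mathcomp Require Import all_boot all_order all_algebra.
From mathcomp Require Import reals exp.
From mathcomp Require Export complex.
Set Implicit Arguments. Unset Strict Implicit. Unset Printing Implicit Defensive.
Import GRing.Theory Num.Theory.
Local Open Scope ring_scope.
Local Open Scope complex_scope.

Section Defs.
Variable R : realType.
Local Notation C := R[i].

Definition adj m n (M : 'M[C]_(m, n)) : 'M[C]_(n, m) := (map_mx conjc M)^T.

Definition herm_mx N (A : 'M[C]_N) : Prop := adj A = A.
Definition posdef_mx N (A : 'M[C]_N) : Prop :=
  forall x : 'cV[C]_N, x != 0 -> 0 < (adj x *m A *m x) 0 0.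
Definition unitary_mx N (U : 'M[C]_N) : Prop := adj U *m U = 1%:M.

Definition in_fov N (M : 'M[C]_N) (z : C) : Prop :=
  exists x : 'cV[C]_N, adj x *m x = 1%:M /\ z = (adj x *m M *m x) 0 0.

(* Given a spectral decomposition A = U diag(d) U^* (U unitary_mx, d > 0),
   A^s = U diag(d^s) U^*. *)
Definition spec_pow N (U : 'M[C]_N) (d : 'rV[R]_N) (s : R) : 'M[C]_N :=
  U *m diag_mx (map_mx (fun r : R => (r `^ s)%:C) d) *m adj U.

Definition spec_decomp N (A U : 'M[C]_N) (d : 'rV[R]_N) : Prop :=
  [/\ unitary_mx U, forall i, 0 < d 0 i &
      A = U *m diag_mx (map_mx (fun r : R => r%:C) d) *m adj U].

Definition poly_a (m : nat) : {poly C} := ('X^(m.+1) - 'X^m)%R.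
Definition poly_b (theta u : R) : {poly C} :=
  theta%:C *: (u%:C *: 'X^2 + (1 - u)%:C *: 'X)
  + (1 - theta)%:C *: (u%:C *: 'X + ((1 - u)%:C)%:P).
Definition poly_c (theta : R) (m : nat) : {poly C} :=
  theta%:C *: 'X^(m.+1) + (1 - theta)%:C *: 'X^m.

Definition in_D (theta u : R) (m : nat) (y : R) (mu : C) : Prop :=
  forall xi : C,
    root (poly_a m - y%:C *: poly_c theta m + (y%:C * mu) *: poly_b theta u) xi ->
    `|xi| < 1.

(* A sequence ys, with ys k standing for y_{k-m}, satisfies the theta-method
   recursion for all n >= 0. *)
Definition theta_rec N (A B : 'M[C]_N) (theta u h : R) (m : nat)
  (ys : nat -> 'cV[C]_N) : Prop :=
  forall n : nat,
    ys (n + m).+1 =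
      ys (n + m)
      + (h * (1 - theta))%:C *:
          (- (A *m ys (n + m)) + B *m ((1 - u)%:C *: ys n + u%:C *: ys n.+1))
      + (h * theta)%:C *:
          (- (A *m ys (n + m).+1) + B *m ((1 - u)%:C *: ys n.+1 + u%:C *: ys n.+2)).

Definition theta_stable N (A B : 'M[C]_N) (theta u h : R) (m : nat) : Prop :=
  forall ys : nat -> 'cV[C]_N, theta_rec A B theta u h m ys ->
    forall eps : R, 0 < eps -> exists K : nat, forall k : nat, (K <= k)%N ->
      forall i, `|ys k i 0| < eps%:C.

End Defs.

(* Each component of a solution of the theta-method recursion is annihilated by
   the scalar difference operator [det L(E)], where [E] is the shift and
   [L(xi) = a(xi) I + h c(xi) A - h b(xi) B].  A root [xi] of [det L] has a kernel
   vector [v]; testing [L(xi) v = 0] against [w^* A^(p/2-1)] with [w = A^(p/2) v]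
   and putting [g = A^(-1/2) w] gives [a(xi) - y c(xi) + y mu b(xi) = 0], where
   [mu = w^* M w / w^* w] lies in [F(M)] for [M = A^(p/2-1) B A^(-p/2)] and
   [y = - h g^* A g / g^* g] lies in [-h F(A)]; so [|xi| < 1] by hypothesis.
   Factoring [det L] over [C] then reduces decay to first-order recursions
   [x_(k+1) = xi x_k + w_k] with [|xi| < 1] and [w -> 0]. *)

From mathcomp Require Import all_boot all_order all_algebra.
From mathcomp Require Import reals exp.
From mathcomp Require Import complex.
From mathcomp Require Import ring lra.
Set Implicit Arguments.
Unset Strict Implicit.
Unset Printing Implicit Defensive.
Import Order.TTheory GRing.Theory Num.Theory.
Local Open Scope ring_scope.
Local Open Scope complex_scope.

Section ShiftOperator.
Context {K : comNzRingType}.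
Implicit Types (p q : {poly K}) (x : nat -> K).

(* [pshift p x] is [p(E) x] for the shift operator [(E x) n = x n.+1]. *)
Definition pshift p x : nat -> K := fun n => \sum_(i < size p) p`_i * x (n + i)%N.

Lemma pshift_widen p k x n : (size p <= k)%N ->
  pshift p x n = \sum_(i < k) p`_i * x (n + i)%N.
Proof.
move=> pk; rewrite /pshift (big_ord_widen k (fun i => p`_i * x (n + i)%N) pk).
rewrite [RHS](bigID (fun i : 'I_k => (i < size p)%N)) /= [X in _ + X]big1 ?addr0 //.
by move=> i; rewrite -leqNgt => pi; rewrite nth_default // mul0r.
Qed.

Lemma pshift0 x n : pshift 0 x n = 0.
Proof. by rewrite /pshift size_poly0 big_ord0. Qed.

Lemma pshiftD p q x n : pshift (p + q) x n = pshift p x n + pshift q x n.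
Proof.
rewrite (pshift_widen x n (size_polyD p q)) (pshift_widen x n (leq_maxl _ (size q))).
rewrite (pshift_widen x n (leq_maxr (size p) _)) -big_split /=.
by apply: eq_bigr => i _; rewrite coefD mulrDl.
Qed.

Lemma pshiftZ c p x n : pshift (c *: p) x n = c * pshift p x n.
Proof.
rewrite (pshift_widen x n (size_scale_leq c p)) /pshift mulr_sumr.
by apply: eq_bigr => i _; rewrite coefZ mulrA.
Qed.

Lemma pshiftB p q x n : pshift (p - q) x n = pshift p x n - pshift q x n.
Proof. by rewrite pshiftD -scaleN1r pshiftZ mulN1r. Qed.

Lemma pshiftC c x n : pshift c%:P x n = c * x n.
Proof.
by rewrite (pshift_widen x n (size_polyC_leq1 c)) big_ord1 coefC addn0.
Qed.

Lemma pshiftMX p x n : pshift (p * 'X) x n = pshift p x n.+1.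
Proof.
have sz : (size (p * 'X)%R <= (size p).+1)%N.
  by apply: leq_trans (size_polyMleq _ _) _; rewrite size_polyX addn2.
rewrite (pshift_widen x n sz) big_ord_recl coefMX /= mul0r add0r.
by apply: eq_bigr => i _; rewrite coefMX /= /bump /= add1n addnS.
Qed.

Lemma pshiftXn k x n : pshift 'X^k x n = x (n + k)%N.
Proof.
elim: k n => [|k IH] n; first by rewrite expr0 pshiftC mul1r addn0.
by rewrite exprSr pshiftMX IH addSnnS.
Qed.

Lemma pshiftX x n : pshift 'X x n = x n.+1.
Proof. by rewrite -['X]mul1r pshiftMX pshiftC mul1r. Qed.

Lemma pshift_sum (I : finType) (P : I -> {poly K}) x n :
  pshift (\sum_j P j) x n = \sum_j pshift (P j) x n.
Proof.
apply: (big_ind2 (fun p s => pshift p x n = s)) => // [|p1 s1 p2 s2 <- <-].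
  by rewrite pshift0.
by rewrite pshiftD.
Qed.

Lemma pshift_mul p q x n : pshift (p * q) x n = pshift p (pshift q x) n.
Proof.
elim/poly_ind: p n => [|p c IH] n; first by rewrite mul0r !pshift0.
by rewrite mulrDl mulrAC mul_polyC !pshiftD !pshiftMX IH pshiftZ pshiftC.
Qed.

Lemma pshift_seqZ c p x n : pshift p (fun t => c * x t) n = c * pshift p x n.
Proof. by rewrite /pshift mulr_sumr; apply: eq_bigr => i _; rewrite mulrCA. Qed.

Lemma pshift_seq_sum (I : finType) p (x : I -> nat -> K) n :
  pshift p (fun t => \sum_j x j t) n = \sum_j pshift p (x j) n.
Proof.
rewrite /pshift; under eq_bigr do rewrite mulr_sumr.
by rewrite exchange_big.
Qed.

Lemma eq_pshift p x y n : x =1 y -> pshift p x n = pshift p y n.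
Proof. by move=> xy; apply: eq_bigr => i _; rewrite xy. Qed.

Lemma pshift_eq0 p x n : (forall t, x t = 0) -> pshift p x n = 0.
Proof. by move=> x0; rewrite /pshift big1 // => i _; rewrite x0 mulr0. Qed.

End ShiftOperator.

Lemma eventually_lt_of_descent (R : archiRealFieldType) (a : nat -> R) (c e : R)
    (K : nat) :
  0 < c -> (forall k, 0 <= a k) ->
  (forall k, (K <= k)%N -> a k < e -> a k.+1 < e) ->
  (forall k, (K <= k)%N -> e <= a k -> a k.+1 <= a k - c) ->
  exists K', forall k, (K' <= k)%N -> a k < e.
Proof.
move=> c0 a_ge0 stay descend.
have [n aK_lt] : exists n : nat, a K < n%:R * c.
  exists (Num.Def.archi_bound (a K / c)).
  by rewrite -ltr_pdivrMr // archi_boundP // divr_ge0 // ltW.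
have hit_or_drop j : (exists i, a (K + i)%N < e) \/ a (K + j)%N <= a K - j%:R * c.
  elim: j => [|j [hit|drop]]; first by right; rewrite addn0 mul0r subr0.
  - by left.
  - have [lt|ge] := ltrP (a (K + j)%N) e; first by left; exists j.
    right; rewrite addnS; apply: le_trans (descend _ (leq_addr _ _) ge) _.
    by rewrite -natr1 mulrDl mul1r; lra.
have [i lt_i] : exists i, a (K + i)%N < e.
  by case: (hit_or_drop n) => // drop; have := a_ge0 (K + n)%N; lra.
exists (K + i)%N => k /subnKC <-; elim: (k - (K + i))%N => [|t IH].
  by rewrite addn0.
by rewrite addnS; apply: stay IH; rewrite -addnA leq_addr.
Qed.

Section Vanishing.
Context {R : realType}.
Local Notation C := R[i].
Local Notation normc := (@Normc.normc R).

Lemma normr_complexE (z : C) : `|z| = (normc z)%:C.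
Proof. by case: z. Qed.

Lemma normc_ge0 (z : C) : 0 <= normc z.
Proof. by rewrite -lecR -normr_complexE normr_ge0. Qed.

Definition vanishing (x : nat -> C) : Prop :=
  forall e : R, 0 < e -> exists K, forall k, (K <= k)%N -> normc (x k) < e.

Lemma vanishing_first_order (r : C) (x w : nat -> C) :
  normc r < 1 -> vanishing w -> (forall k, x k.+1 = r * x k + w k) -> vanishing x.
Proof.
move=> r_lt1 w0 rec e e0.
have c0 : 0 < (1 - normc r) * e / 2 by rewrite divr_gt0 // mulr_gt0 // subr_gt0.
have [K wK] := w0 _ c0.
have step k : (K <= k)%N ->
    normc (x k.+1) <= normc r * normc (x k) + (1 - normc r) * e / 2.
  move=> Kk; rewrite rec -Normc.normcM.
  by apply: le_trans (le_normcD _ _) _; rewrite lerD2l ltW // wK.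
have r_ge0 := normc_ge0 r.
apply: (@eventually_lt_of_descent _ (fun k => normc (x k)) _ _ K c0)
  => [k|k Kk xk|k Kk xk].
- exact: normc_ge0.
- by apply: le_lt_trans (step _ Kk) _; nra.
- by apply: le_trans (step _ Kk) _; nra.
Qed.

Lemma vanishing_root_factors (s : seq C) (x : nat -> C) :
  all (fun z => normc z < 1) s ->
  vanishing (pshift (\prod_(z <- s) ('X - z%:P)) x) -> vanishing x.
Proof.
elim: s x => [|z s IH] x /=.
  by move=> _ x0 e /x0 [K xK]; exists K => k /xK; rewrite big_nil pshiftC mul1r.
case/andP=> z_lt1 s_lt1; rewrite big_cons mulrC => x0.
have w0 : vanishing (pshift ('X - z%:P) x).
  by apply: IH => // e /x0 [K xK]; exists K => k /xK; rewrite pshift_mul.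
apply: (@vanishing_first_order z x _ z_lt1 w0) => k.
by rewrite pshiftB pshiftX pshiftC addrC subrK.
Qed.

Lemma vanishing_of_annihilated (q : {poly C}) (x : nat -> C) : q != 0 ->
  (forall z, root q z -> normc z < 1) -> (forall n, pshift q x n = 0) ->
  vanishing x.
Proof.
move=> q0 roots_lt1 qx0; have [s qE] := closed_field_poly_normal q.
apply: (@vanishing_root_factors s).
  apply/allP => z zs; apply: roots_lt1.
  by rewrite qE rootZ ?lead_coef_eq0 // root_prod_XsubC.
move=> e e0; exists 0%N => k _.
have := qx0 k; rewrite qE pshiftZ => /eqP.
by rewrite mulf_eq0 lead_coef_eq0 (negbTE q0) => /eqP ->; rewrite Normc.normc0.
Qed.

End Vanishing.

Section CharacteristicMatrix.
Context {R : realType}.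
Variables (N : nat) (A B : 'M[R[i]]_N) (theta u h : R) (m : nat).
Local Notation C := R[i].

Definition char_mx : 'M[{poly C}]_N :=
  poly_a R m *: 1%:M + (h%:C *: poly_c theta m) *: map_mx polyC A
  - (h%:C *: poly_b theta u) *: map_mx polyC B.

Lemma pshift_mx_row (p : {poly C}) (M : 'M[C]_N) (ys : nat -> 'cV[C]_N) i n :
  \sum_j pshift ((p *: map_mx polyC M) i j) (fun t => ys t j 0) n
  = pshift p (fun t => (M *m ys t) i 0) n.
Proof.
under eq_bigr do rewrite !mxE mulrC mul_polyC pshiftZ -pshift_seqZ.
by rewrite -pshift_seq_sum; apply: eq_pshift => t; rewrite mxE.
Qed.

Lemma char_mx_row (ys : nat -> 'cV[C]_N) i n :
  \sum_j pshift (char_mx i j) (fun t => ys t j 0) n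
  = pshift (poly_a R m) (fun t => ys t i 0) n
    + h%:C * pshift (poly_c theta m) (fun t => (A *m ys t) i 0) n
    - h%:C * pshift (poly_b theta u) (fun t => (B *m ys t) i 0) n.
Proof.
rewrite /char_mx -(map_mx1 polyC).
under eq_bigr do rewrite ![@fun_of_matrix _ _ _ (_ + _) _ _]mxE
  [@fun_of_matrix _ _ _ (- _) _ _]mxE pshiftB pshiftD.
rewrite sumrB big_split /= !pshift_mx_row !pshiftZ.
by under eq_pshift do rewrite mul1mx.
Qed.

Lemma pshift_poly_a x n : pshift (poly_a R m) x n = x (n + m).+1 - x (n + m)%N.
Proof. by rewrite /poly_a pshiftB !pshiftXn addnS. Qed.

Lemma pshift_poly_c x n : pshift (poly_c theta m) x n =
  theta%:C * x (n + m).+1 + (1 - theta)%:C * x (n + m)%N.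
Proof. by rewrite /poly_c pshiftD !pshiftZ !pshiftXn addnS. Qed.

Lemma pshift_poly_b x n : pshift (poly_b theta u) x n =
  theta%:C * (u%:C * x n.+2 + (1 - u)%:C * x n.+1)
  + (1 - theta)%:C * (u%:C * x n.+1 + (1 - u)%:C * x n).
Proof. by rewrite /poly_b !(pshiftD, pshiftZ, pshiftXn, pshiftX, pshiftC) addn2. Qed.

Lemma char_mx_annihilates ys : theta_rec A B theta u h m ys ->
  forall i n, \sum_j pshift (char_mx i j) (fun t => ys t j 0) n = 0.
Proof.
move=> rec i n; rewrite char_mx_row pshift_poly_a pshift_poly_b pshift_poly_c.
have := congr1 (fun v : 'cV[C]_N => v i 0) (rec n).
rewrite !(mulmxDr, mulmxN) -!(scalemxAr _ B).
(* Abstracting the matrix-vector products keeps [mxE] from expanding them. *)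
move: (A *m ys _) (A *m ys _) (B *m ys _) (B *m ys _) (B *m ys _) => a1 a0 b0 b1 b2.
move: (ys (n + m).+1) (ys (n + m)) => y1 y0.
rewrite !mxE => ->.
rewrite !rmorphM !rmorphB !rmorph1 /=; ring.
Qed.

Lemma det_char_mx_annihilates ys : theta_rec A B theta u h m ys ->
  forall k n, pshift (\det char_mx) (fun t => ys t k 0) n = 0.
Proof.
move=> rec k n.
have -> : pshift (\det char_mx) (fun t => ys t k 0) n
    = \sum_j pshift ((\det char_mx)%:M k j) (fun t => ys t j 0) n.
  rewrite (bigD1 k) //= mxE eqxx mulr1n big1 ?addr0 // => j jk.
  by rewrite mxE eq_sym (negbTE jk) mulr0n pshift0.
rewrite -mul_adj_mx; under eq_bigr do rewrite mxE pshift_sum.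
rewrite exchange_big big1 //= => i _; under eq_bigr do rewrite pshift_mul.
by rewrite -pshift_seq_sum; apply: pshift_eq0 => t; apply: char_mx_annihilates.
Qed.

Lemma char_mx_eval (xi : C) : map_mx (horner_eval xi) char_mx =
  (poly_a R m).[xi] *: 1%:M + (h%:C * (poly_c theta m).[xi]) *: A
  - (h%:C * (poly_b theta u).[xi]) *: B.
Proof.
by apply/matrixP => i j; rewrite !mxE horner_evalE !hornerE /= hornerMn hornerC.
Qed.

Lemma root_det_char_mx (xi : C) : root (\det char_mx) xi ->
  exists2 v : 'cV[C]_N, v != 0 &
    (poly_a R m).[xi] *: v + (h%:C * (poly_c theta m).[xi]) *: (A *m v)
    - (h%:C * (poly_b theta u).[xi]) *: (B *m v) = 0.
Proof.
move=> /eqP det0; set M := map_mx (horner_eval xi) char_mx.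
have : \det M^T == 0 by rewrite det_tr det_map_mx /= horner_evalE det0.
case/det0P => v v0 vM0; exists v^T; first by rewrite trmx_eq0.
suff -> : (poly_a R m).[xi] *: v^T + (h%:C * (poly_c theta m).[xi]) *: (A *m v^T)
    - (h%:C * (poly_b theta u).[xi]) *: (B *m v^T) = M *m v^T.
  by rewrite -[M]trmxK -trmx_mul vM0 trmx0.
by rewrite /M char_mx_eval !mulmxDl mulNmx -!scalemxAl mul1mx.
Qed.

End CharacteristicMatrix.

Section FieldOfValues.
Context {R : realType}.
Local Notation C := R[i].

Lemma adjM m n p (X : 'M[C]_(m, n)) (Y : 'M[C]_(n, p)) :
  adj (X *m Y) = adj Y *m adj X.
Proof. by rewrite /adj map_mxM trmx_mul. Qed.

Lemma adjK m n (X : 'M[C]_(m, n)) : adj (adj X) = X.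
Proof. by apply/matrixP => i j; rewrite !mxE conjcK. Qed.

Lemma adjZ m n (k : C) (X : 'M[C]_(m, n)) : adj (k *: X) = conjc k *: adj X.
Proof. by apply/matrixP => i j; rewrite !mxE rmorphM. Qed.

Lemma adj_diag_real n (f : R -> R) (d : 'rV[R]_n) :
  adj (diag_mx (map_mx (fun r => (f r)%:C) d))
  = diag_mx (map_mx (fun r => (f r)%:C) d).
Proof.
apply/matrixP => i j; rewrite !mxE.
by case: eqVneq => [->|_]; rewrite ?mulr1n ?conjc_real ?mulr0n ?conjc0.
Qed.

Lemma conjc_mulr_self (z : C) :
  conjc z * z = ((complex.Re z) ^+ 2 + (complex.Im z) ^+ 2)%:C.
Proof.
by case: z => a b; apply/eqP; rewrite eq_complex /=; apply/andP; split; apply/eqP; ring.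
Qed.

Lemma adj_mulmx_self n (x : 'cV[C]_n) : x != 0 ->
  exists2 r : R, 0 < r & adj x *m x = (r%:C)%:M.
Proof.
move=> x0; set sq := fun i => (complex.Re (x i 0)) ^+ 2 + (complex.Im (x i 0)) ^+ 2.
exists (\sum_i sq i); last first.
  apply/matrixP => i j; rewrite !ord1 !mxE mulr1n rmorph_sum.
  by apply: eq_bigr => k _; rewrite !mxE conjc_mulr_self.
have [i xi0] : exists i, x i 0 != 0.
  apply/existsP; apply: contraNT x0 => /existsPn x_eq0.
  apply/eqP/matrixP => i j; rewrite ord1 mxE.
  by apply/eqP; rewrite -[_ == _]negbK x_eq0.
rewrite (bigD1 i) //= ltr_pwDl ?sumr_ge0 // => [|k _]; last by rewrite addr_ge0 ?sqr_ge0.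
rewrite lt0r addr_ge0 ?sqr_ge0 // andbT; apply: contraNneq xi0.
rewrite /sq; case: (x i 0) => a b /= /eqP.
by rewrite paddr_eq0 ?sqr_ge0 // !sqrf_eq0 => /andP[/eqP-> /eqP->].
Qed.

Lemma rayleigh_in_fov n (M : 'M[C]_n) (x : 'cV[C]_n) (r : R) :
  0 < r -> adj x *m x = (r%:C)%:M -> in_fov M ((adj x *m M *m x) 0 0 / r%:C).
Proof.
move=> r0 xx; set s := Num.sqrt r.
have s0 : s%:C != 0 by rewrite eq_complex /= negb_and gt_eqF ?sqrtr_gt0.
have rs : r%:C = s%:C ^+ 2 by rewrite -rmorphXn /= sqr_sqrtr // ltW.
have sJ : conjc (s%:C^-1) = s%:C^-1 by rewrite -fmorphV conjc_real.
exists (s%:C^-1 *: x); split.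
  by rewrite adjZ sJ -scalemxAl -scalemxAr xx !scale_scalar_mx rs; congr (_%:M); field.
by rewrite adjZ sJ -!scalemxAl -scalemxAr !mxE rs; field.
Qed.

End FieldOfValues.

Section SpectralPowers.
Context {R : realType}.
Variables (n : nat) (A U : 'M[R[i]]_n) (d : 'rV[R]_n).
Hypothesis decA : spec_decomp A U d.
Local Notation C := R[i].
Local Notation S := (spec_pow U d).

Lemma spec_powD s t : S s *m S t = S (s + t).
Proof.
have [unitU d_gt0 _] := decA.
rewrite /spec_pow -!mulmxA; congr (U *m _).
rewrite (mulmxA (adj U) U) unitU mul1mx mulmxA mulmx_diag.
congr (diag_mx _ *m _); apply/rowP => j; rewrite !mxE -rmorphM /=.
by rewrite powRD // (gt_eqF (d_gt0 j)) implybT.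
Qed.

Lemma spec_pow0 : S 0 = 1%:M.
Proof.
have [unitU _ _] := decA.
rewrite /spec_pow (_ : map_mx _ d = const_mx 1); last first.
  by apply/rowP => j; rewrite !mxE powRr0.
by rewrite diag_const_mx mulmx1 mulmx1C.
Qed.

Lemma spec_pow1 : S 1 = A.
Proof.
have [_ d_gt0 ->] := decA; rewrite /spec_pow.
by congr (_ *m diag_mx _ *m _); apply/rowP => j; rewrite !mxE powRr1 // ltW.
Qed.

Lemma adj_spec_pow_mul s (x : 'cV[C]_n) : adj (S s *m x) = adj x *m S s.
Proof. by rewrite adjM /spec_pow !adjM adjK adj_diag_real !mulmxA. Qed.

Lemma spec_pow_formE s t (x : 'cV[C]_n) :
  adj x *m S s *m (S t *m x) = adj x *m S (s + t) *m x.
Proof. by rewrite -(spec_powD s t) (mulmxA (adj x)); apply: mulmxA. Qed.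

Lemma spec_pow_mulmx_eq0 s (x : 'cV[C]_n) : (S s *m x == 0) = (x == 0).
Proof.
apply/eqP/eqP => [x0|->]; last by rewrite mulmx0.
by rewrite -[x]mul1mx -spec_pow0 -(addNr s) -spec_powD -mulmxA x0 mulmx0.
Qed.

Lemma spec_pow_forms p (w : 'cV[C]_n) :
  let v := S (- (p / 2)) *m w in let g := S (- (1 / 2)) *m w in
  [/\ adj w *m S (p / 2 - 1) *m v = adj g *m g,
       adj w *m S (p / 2 - 1) *m (A *m v) = adj w *m w
     & adj g *m A *m g = adj w *m w].
Proof.
move=> v g; split.
- rewrite spec_pow_formE /g adj_spec_pow_mul [RHS]spec_pow_formE.
  by have -> : p / 2 - 1 + - (p / 2) = - (1 / 2) + - (1 / 2) by field.
- rewrite -spec_pow1 (mulmxA (S 1)) spec_powD spec_pow_formE.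
  by rewrite (_ : _ + _ = 0) ?spec_pow0 ?mulmx1 //; ring.
- rewrite /g adj_spec_pow_mul -spec_pow1 -(mulmxA (adj w)) spec_powD spec_pow_formE.
  by rewrite (_ : _ + _ = 0) ?spec_pow0 ?mulmx1 //; field.
Qed.

Lemma kernel_vector_fov (B : 'M[C]_n) (p : R) (al be ga : C) (v : 'cV[C]_n) :
  v != 0 -> al *: v + be *: (A *m v) - ga *: (B *m v) = 0 ->
  exists (r : R) (mu : C),
    [/\ in_fov (S (p / 2 - 1) *m B *m S (- (p / 2))) mu, in_fov A r%:C
       & al + (be - ga * mu) * r%:C = 0].
Proof.
move=> v0 kerv.
have [w vE w0] : exists2 w, v = S (- (p / 2)) *m w & w != 0.
  exists (S (p / 2) *m v); last by rewrite spec_pow_mulmx_eq0.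
  by rewrite mulmxA spec_powD addNr spec_pow0 mul1mx.
have := spec_pow_forms p w; rewrite -vE; set g := S _ *m w => -[form_v form_Av form_Ag].
have g0 : g != 0 by rewrite spec_pow_mulmx_eq0.
have [rw rw0 ww] := adj_mulmx_self w0.
have [rg rg0 gg] := adj_mulmx_self g0.
set X := adj w *m (S (p / 2 - 1) *m B *m S (- (p / 2))) *m w.
have form_Bv : adj w *m S (p / 2 - 1) *m (B *m v) = X by rewrite vE /X !mulmxA.
have eq_g : al * rg%:C + be * rw%:C - ga * X 0 0 = 0.
  have := congr1 (fun Y => (adj w *m S (p / 2 - 1) *m Y) 0 0) kerv.
  rewrite /= mulmxBr mulmxDr -!scalemxAr form_v form_Av form_Bv gg ww mulmx0.
  by clearbody X; rewrite !mxE !mulr1n.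
have rwC : rw%:C != 0 by rewrite eq_complex /= negb_and gt_eqF.
have rgC : rg%:C != 0 by rewrite eq_complex /= negb_and gt_eqF.
exists (rw / rg), (X 0 0 / rw%:C); split.
- exact: rayleigh_in_fov.
- by have := rayleigh_in_fov A rg0 gg; rewrite form_Ag ww mxE mulr1n rmorphM fmorphV.
- rewrite rmorphM fmorphV /=; apply: (mulIf rgC); rewrite mul0r -eq_g; field.
  by rewrite rwC rgC.
Qed.

End SpectralPowers.

Lemma det_char_mx_roots_lt1 {R : realType} (N : nat) (A B : 'M[R[i]]_N)
    (theta u h : R) (m : nat) (p : R) (U : 'M[R[i]]_N) (d : 'rV[R]_N) :
  spec_decomp A U d ->
  (forall z, in_fov (spec_pow U d (p / 2 - 1) *m B *m spec_pow U d (- (p / 2))) z ->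
     forall y : R, (exists w, in_fov A w /\ y%:C = - h%:C * w) ->
     in_D theta u m y z) ->
  forall xi, root (\det (char_mx A B theta u h m)) xi -> `|xi| < 1.
Proof.
move=> decA fov_in_D xi /root_det_char_mx [v v0 kerv].
have [r [mu [mu_fov r_fov eq0]]] := kernel_vector_fov decA p v0 kerv.
apply: (fov_in_D _ mu_fov (- h * r)); first by exists r%:C; rewrite rmorphM rmorphN.
move: eq0; rewrite /root.
move: (poly_a R m) (poly_c theta m) (poly_b theta u) => pa pc pb eq0.
rewrite !(hornerD, hornerN, hornerZ) -eq0 rmorphM rmorphN /=.
by apply/eqP; ring.
Qed.

Theorem mainTheorem4 (R : realType) (N : nat) (tau : R) (A B : 'M[R[i]]_N)
  (theta u : R) (m : nat) :
  0 < tau -> herm_mx A -> posdef_mx A ->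
  0 <= theta <= 1 -> 0 <= u < 1 -> (0 < m)%N -> (0 < u -> (2 <= m)%N) ->
  let h := tau / (m%:R - u) in
  (exists (p : R) (U : 'M[R[i]]_N) (d : 'rV[R]_N),
     spec_decomp A U d /\
     forall z : R[i],
       in_fov (spec_pow U d (p / 2 - 1) *m B *m spec_pow U d (- (p / 2))) z ->
       forall y : R,
         (exists w : R[i], in_fov A w /\ (y%:C)%C = - (h%:C)%C * w) ->
         in_D theta u m y z) ->
  theta_stable A B theta u h m.
Proof.
move=> _ _ _ _ _ _ _ h [p [U [d [decA fov_in_D]]]] ys rec eps eps0.
set q := \det (char_mx A B theta u h m).
have roots_lt1 z : root q z -> Normc.normc z < 1.
  move/(det_char_mx_roots_lt1 decA fov_in_D).
  by rewrite normr_complexE -(rmorph1 (real_complex R)) ltcR.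
have q0 : q != 0.
  by apply/eqP => q0; have := roots_lt1 1; rewrite q0 root0 Normc.normc1 ltxx => /(_ isT).
have [K K_eps] := fin_all_exists (fun k =>
  vanishing_of_annihilated q0 roots_lt1 (det_char_mx_annihilates rec k) eps0).
exists (\max_k K k) => t tK i; rewrite normr_complexE ltcR.
by apply: K_eps; apply: leq_trans tK; apply: leq_bigmax.
Qed.
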